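(* Let $\varphi$ be an own-peak-only rule on $\mathcal{E}_{\mathcal{SP}}$. If $\varphi$ is envy-free, or if $\varphi$ satisfies the equal division lower bound, then $\varphi$ meets the equal division guarantee.
   Context: Let $N=\{1,\dots,n\}$ be a finite set of agents. A preference $R_i$ is a continuous complete preorder on $\mathbb{R}_+\cup\{\infty\}$ ($P_i$ strict, $I_i$ indifference); its peak $p(R_i)$ is the set of maximal elements. $R_i$ is single-peaked if $p(R_i)$ is a singleton (identified with its element) and for $x,x'\in\mathbb{R}_+$, $xP_ix'$ whenever $x'<x\le p(R_i)$ or $p(R_i)\le x<x'$; $\mathcal{SP}$ is the set of these. An economy is $(R,\Omega)$, $R\in\mathcal{SP}^n$, $\Omega>0$; $\mathcal{E}_{\mathcal{SP}}$ is the set of economies; a rule is a map $\varphi:\mathcal{E}_{\mathcal{SP}}\to\mathbb{R}^n_+$ with $\sum_j\varphi_j(R,\Omega)=\Omega$. Own-peak-only: $p(R_i')=p(R_i)$ implies $\varphi_i(R,\Omega)=\varphi_i(R_i',R_{-i},\Omega)$. Envy-free: for all economies and $i\ne j$, $\varphi_i(R,\Omega)R_i\varphi_j(R,\Omega)$. Equal division lower bound: for all economies and $i$, $\varphi_i(R,\Omega)R_i\frac{\Omega}{n}$. Equal division guarantee: for all economies and $i$ with $p(R_i)=\Omega/n$, $\varphi_i(R,\Omega)I_i\frac{\Omega}{n}$. *)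

(* Consumption space R_+ ∪ {∞} is the
   subset [0, +oo] of the extended reals \bar R, with its usual topology. *)
From HB Require Import structures.
From mathcomp Require Import all_boot all_order all_algebra.
From mathcomp Require Import all_classical all_reals all_analysis.
Set Implicit Arguments. Unset Strict Implicit. Unset Printing Implicit Defensive.
Import Order.TTheory GRing.Theory Num.Theory.
Local Open Scope classical_set_scope.
Local Open Scope ring_scope.

Section Defs.
Variable R : realType.

Definition X : set (\bar R) := [set x | (0 <= x)%E].

Definition pref := \bar R -> \bar R -> Prop.
Definition strict (Ri : pref) x y := Ri x y /\ ~ Ri y x.
Definition indiff (Ri : pref) x y := Ri x y /\ Ri y x.

Definition is_preference (Ri : pref) : Prop :=
  (forall x y, X x -> X y -> Ri x y \/ Ri y x) /\
  (forall x y z, X x -> X y -> X z -> Ri x y -> Ri y z -> Ri x z) /\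
  (forall y, X y -> closed [set x | X x /\ Ri x y]) /\
  (forall y, X y -> closed [set x | X x /\ Ri y x]).

Definition peak (Ri : pref) : set (\bar R) :=
  [set x | X x /\ forall y, X y -> Ri x y].

Definition single_peaked (Ri : pref) : Prop :=
  is_preference Ri /\
  exists p, peak Ri = [set p] /\
    forall x x' : R, 0 <= x -> 0 <= x' ->
      (((x' < x)%R /\ (x%:E <= p)%E) \/ ((p <= x%:E)%E /\ (x < x')%R)) ->
      strict Ri x%:E x'%:E.

Variable n : nat.

Definition profile := 'I_n -> pref.

Definition economy (Rp : profile) (Om : R) : Prop :=
  (forall i, single_peaked (Rp i)) /\ 0 < Om.

(* a candidate rule: its values only matter on economies *)
Definition rule_fun := profile -> R -> 'I_n -> R.

Definition is_rule (phi : rule_fun) : Prop :=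
  forall Rp Om, economy Rp Om ->
    (forall i, 0 <= phi Rp Om i) /\ \sum_(i < n) phi Rp Om i = Om.

Definition upd (Rp : profile) (i : 'I_n) (Ri' : pref) : profile :=
  fun j => if j == i then Ri' else Rp j.

Definition own_peak_only (phi : rule_fun) : Prop :=
  forall Rp Om i Ri', economy Rp Om -> single_peaked Ri' ->
    peak Ri' = peak (Rp i) ->
    phi Rp Om i = phi (upd Rp i Ri') Om i.

Definition envy_free (phi : rule_fun) : Prop :=
  forall Rp Om, economy Rp Om -> forall i j, i != j ->
    Rp i (phi Rp Om i)%:E (phi Rp Om j)%:E.

Definition equal_division_lower_bound (phi : rule_fun) : Prop :=
  forall Rp Om, economy Rp Om -> forall i,
    Rp i (phi Rp Om i)%:E (Om / n%:R)%:E.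

Definition equal_division_guarantee (phi : rule_fun) : Prop :=
  forall Rp Om, economy Rp Om -> forall i,
    peak (Rp i) = [set (Om / n%:R)%:E] ->
    indiff (Rp i) (phi Rp Om i)%:E (Om / n%:R)%:E.

End Defs.

From mathcomp Require Import all_boot all_order all_algebra.
From mathcomp Require Import all_classical all_reals all_analysis.
From mathcomp Require Import ring lra.
Set Implicit Arguments. Unset Strict Implicit. Unset Printing Implicit Defensive.
Import Order.TTheory GRing.Theory Num.Theory.
Local Open Scope classical_set_scope.
Local Open Scope ring_scope.

(* The equal division lower bound case is immediate: an agent whose peak is
   p = Om/n weakly prefers her share to p by the bound, and p to her share
   because p is her peak.  Under envy-freeness, suppose she receives x <> p.
   Since the rule is own-peak-only, x does not change when her preference is
   replaced by a V-shaped one with peak p, steep on the side of x and so flat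
   on the other side that every bundle in [0, Om] beyond p beats x.  As the
   shares sum to n p, some agent receives such a bundle and is envied. *)

Lemma ler_sum_term (R : numDomainType) (I : finType) (F : I -> R) i :
  (forall j, 0 <= F j) -> F i <= \sum_j F j.
Proof. by move=> F_ge0; rewrite (bigD1 i) //= lerDl sumr_ge0. Qed.

Section Averaging.
Variables (R : realDomainType) (I : finType).

Lemma exists_gt_of_eq_sum (F G : I -> R) i :
  \sum_j F j = \sum_j G j -> F i < G i -> exists j, G j < F j.
Proof.
move=> eqFG ltFGi; apply: contrapT => /forallNP noj.
suff : \sum_j F j < \sum_j G j by rewrite eqFG ltxx.
rewrite (bigD1 i) //= [X in _ < X](bigD1 i) //= ltr_leD //.
by apply: ler_sum => j _; rewrite leNgt; apply/negP/noj.
Qed.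

Lemma exists_opposite_side (y : I -> R) (p : R) i :
  \sum_j y j = p *+ #|I| -> y i != p -> exists j, (y i - p) * (y j - p) < 0.
Proof.
rewrite -sumr_const => sum_y; case: ltgtP => // [lt_yp|lt_py] _.
- have [j lt_pyj] := exists_gt_of_eq_sum sum_y lt_yp.
  by exists j; rewrite nmulr_rlt0 ?subr_lt0 ?subr_gt0.
- have [j lt_yjp] := exists_gt_of_eq_sum (esym sum_y) lt_py.
  by exists j; rewrite pmulr_rlt0 ?subr_lt0 ?subr_gt0.
Qed.

End Averaging.

Section VShaped.
Variables (R : realType) (p a b : R).
Hypotheses (a_gt0 : 0 < a) (b_gt0 : 0 < b).

(* The value at -oo is junk: -oo lies outside the consumption space. *)
Definition vdist (z : \bar R) : \bar R :=
  if z is r%:E then (if r <= p then a * (p - r) else b * (r - p))%:E else +oo%E.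

Definition vpref : pref R := fun x y => (vdist x <= vdist y)%E.

Lemma vdist_ge0 z : (0 <= vdist z)%E.
Proof.
case: z => [r||] //=; rewrite lee_fin.
by case: (lerP r p) => r_p; rewrite mulr_ge0 ?subr_ge0 // ltW.
Qed.

Lemma vdist_le z (t : R) : 0 <= t ->
  (vdist z <= t%:E)%E = ((p - t / a)%:E <= z <= (p + t / b)%:E)%E.
Proof.
move=> t_ge0; case: z => [r||] /=; rewrite ?lee_fin ?leey ?leye_eq //.
have ta_ge0 : 0 <= t / a by exact: divr_ge0 (ltW a_gt0).
have tb_ge0 : 0 <= t / b by exact: divr_ge0 (ltW b_gt0).
by case: (lerP r p) => r_p; rewrite -ler_pdivlMl // mulrC;
  apply/idP/andP => [?|[]]; first split; lra.
Qed.

Lemma vdist_ge z (t : R) : 0 <= t ->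
  (t%:E <= vdist z)%E = (z <= (p - t / a)%:E)%E || ((p + t / b)%:E <= z)%E.
Proof.
rewrite le_eqVlt => /predU1P[<-|t_gt0].
  by rewrite !mul0r subr0 addr0 vdist_ge0 le_total.
case: z => [r||] /=; rewrite ?lee_fin ?leey ?leNye //.
have ta_gt0 : 0 < t / a by exact: divr_gt0.
have tb_gt0 : 0 < t / b by exact: divr_gt0.
by case: (lerP r p) => r_p; rewrite -ler_pdivrMl // mulrC;
  apply/idP/orP => [?|[]]; lra.
Qed.

Lemma closed_vpref_le y : closed [set x | vpref x y].
Proof.
rewrite /vpref; have := vdist_ge0 y.
case: (vdist y) => [t||] //; rewrite ?lee_fin => t_ge0.
  by under eq_fun do rewrite vdist_le //; rewrite -set_itvcc; exact: itv_closed.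
have -> : [set x | (vdist x <= +oo)%E] = setT.
  by apply/seteqP; split => x // _; exact: leey.
exact: closedT.
Qed.

Lemma closed_vpref_ge y : closed [set x | vpref y x].
Proof.
rewrite /vpref; have := vdist_ge0 y.
case: (vdist y) => [t||] //; rewrite ?lee_fin => t_ge0.
  have -> : [set x | (t%:E <= vdist x)%E] =
      `]-oo, (p - t / a)%:E] `|` `[(p + t / b)%:E, +oo[.
    by apply/seteqP; split => x; rewrite /= !in_itv /= andbT vdist_ge // => /orP.
  exact: (closedU (@lray_closed _ _ _) (@rray_closed _ _ _)).
have -> : [set x | (+oo <= vdist x)%E] = `]-oo, -oo%E] `|` `[+oo%E, +oo[.
  apply/seteqP; split => -[r||]; rewrite /= !in_itv /= ?leey ?lexx ?leye_eq ?leeNy_eq //;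
    by [left | right | case].
exact: (closedU (@lray_closed _ _ _) (@rray_closed _ _ _)).
Qed.

Lemma vpref_preference : is_preference vpref.
Proof.
split; first by move=> x y _ _; apply/orP; exact: le_total.
split; first by move=> x y z _ _ _; exact: le_trans.
have closedX : closed (@X R) by exact: closed_ereal_le_ereal.
by split=> y _; apply: closedI closedX _; [exact: closed_vpref_le | exact: closed_vpref_ge].
Qed.

Lemma strict_vpref x y : strict vpref x y <-> (vdist x < vdist y)%E.
Proof.
rewrite /strict /vpref ltNge; split=> [[_ /negP //]|/negP yx].
by split=> //; rewrite leNgt; apply/negP => /ltW.
Qed.

Hypothesis p_ge0 : 0 <= p.

Lemma peak_vpref : peak vpref = [set p%:E].
Proof.
have vdist_p : vdist p%:E = 0%E by rewrite /= lexx subrr mulr0.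
apply/seteqP; split=> [z [_ z_best] | z -> /=].
  have := z_best p%:E p_ge0.
  by rewrite /vpref vdist_p vdist_le // !mul0r subr0 addr0 -eq_le => /eqP.
by split=> // y _; rewrite /vpref vdist_p vdist_ge0.
Qed.

Lemma vpref_single_peaked : single_peaked vpref.
Proof.
split; first exact: vpref_preference.
exists p%:E; split; first exact: peak_vpref.
move=> x x' _ _; rewrite !lee_fin strict_vpref /= lte_fin.
case=> [[lt_x'x le_xp] | [le_px lt_xx']].
  by rewrite le_xp (le_trans (ltW lt_x'x) le_xp) ltr_pM2l //; lra.
have /negbTE -> : ~~ (x' <= p) by rewrite -ltNge (le_lt_trans le_px lt_xx').
case: (lerP x p) => [le_xp | lt_px]; last by rewrite ltr_pM2l //; lra.
have -> : x = p by apply/le_anti/andP.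
by rewrite subrr mulr0 mulr_gt0 // subr_gt0 (le_lt_trans le_px).
Qed.

End VShaped.

Lemma exists_slopes_opposite_lt (R : realType) (p M x : R) :
  0 <= p <= M -> 0 < M -> x != p ->
  exists a b, [/\ 0 < a, 0 < b & forall y, 0 <= y <= M -> (x - p) * (y - p) < 0 ->
    (vdist p a b y%:E < vdist p a b x%:E)%E].
Proof.
move=> /andP[p_ge0 le_pM] M_gt0 x_neq_p.
have M_neq0 : M != 0 by rewrite gt_eqF.
set e := `|x - p| / (2 * M).
have e_gt0 : 0 < e by rewrite divr_gt0 ?mulr_gt0 // normr_gt0 subr_eq0.
have eM : e * M = `|x - p| / 2 by rewrite /e; field.
case: ltgtP x_neq_p => // [lt_xp | lt_px] _.
- exists 1, e; split=> // y /andP[y_ge0 le_yM].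
  rewrite nmulr_rlt0 ?subr_lt0 // subr_gt0 => lt_py.
  rewrite /= lte_fin (ltW lt_xp) ifN -?ltNge // mul1r.
  rewrite ltr0_norm ?subr_lt0 // in eM; nra.
- exists e, 1; split=> // y /andP[y_ge0 le_yM].
  rewrite pmulr_rlt0 ?subr_gt0 // subr_lt0 => lt_yp.
  rewrite /= lte_fin (ltW lt_yp) ifN -?ltNge // mul1r.
  rewrite gtr0_norm ?subr_gt0 // in eM; nra.
Qed.

Section Rules.
Variables (R : realType) (n : nat).
Implicit Types (Rp : profile R n) (phi : rule_fun R n).

Lemma upd_at Rp i Ri' : upd Rp i Ri' i = Ri'.
Proof. by rewrite /upd eqxx. Qed.

Lemma economy_upd Rp Om i Ri' :
  economy Rp Om -> single_peaked Ri' -> economy (upd Rp i Ri') Om.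
Proof.
move=> [sp_Rp Om_gt0] sp_Ri'; split=> // j.
by rewrite /upd; case: eqP.
Qed.

Lemma equal_share_bounds (Om : R) : (0 < n)%N -> 0 <= Om -> 0 <= Om / n%:R <= Om.
Proof.
move=> n_gt0 Om_ge0; have n_gt0R : 0 < n%:R :> R by rewrite ltr0n.
by rewrite divr_ge0 // ler_pdivrMr // ler_peMr // ler1n.
Qed.

Lemma equal_division_guarantee_of_lower_bound phi :
  is_rule phi -> equal_division_lower_bound phi -> equal_division_guarantee phi.
Proof.
move=> rule_phi edlb Rp Om econ i peak_i.
have [_ best] : peak (Rp i) (Om / n%:R)%:E by rewrite peak_i.
split; first exact: edlb.
by apply: best; rewrite /X /= lee_fin; exact: (rule_phi _ _ econ).1.
Qed.

Lemma equal_division_guarantee_of_envy_free phi :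
  is_rule phi -> own_peak_only phi -> envy_free phi -> equal_division_guarantee phi.
Proof.
move=> rule_phi opo ef Rp Om econ i peak_i; set p := Om / n%:R.
have [p_X best] : peak (Rp i) p%:E by rewrite peak_i.
suff -> : phi Rp Om i = p by split; apply: best.
apply/eqP/negPn/negP => share_neq_p.
have Om_gt0 := econ.2.
have n_gt0 : (0 < n)%N := leq_trans (ltn0Sn i) (ltn_ord i).
have p_bounds := equal_share_bounds n_gt0 (ltW Om_gt0).
have [a [b [a_gt0 b_gt0 prefers]]] := exists_slopes_opposite_lt p_bounds Om_gt0 share_neq_p.
have p_ge0 : 0 <= p by case/andP: p_bounds.
set Rq := upd Rp i (vpref p a b).
have econ_q : economy Rq Om := economy_upd i econ (vpref_single_peaked a_gt0 b_gt0 p_ge0).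
have phi_i : phi Rq Om i = phi Rp Om i.
  by symmetry; apply: opo; rewrite ?peak_vpref ?peak_i //; exact: vpref_single_peaked.
have [y_ge0 sum_y] := rule_phi Rq Om econ_q.
have [j opp] : exists j, (phi Rq Om i - p) * (phi Rq Om j - p) < 0.
  apply: exists_opposite_side; last by rewrite phi_i.
  by rewrite sum_y card_ord -mulr_natr divfK // pnatr_eq0 -lt0n.
have i_neq_j : i != j by apply: contraTneq opp => <-; rewrite -leNgt -expr2 sqr_ge0.
have le_yj_Om : phi Rq Om j <= Om by rewrite -[leRHS]sum_y ler_sum_term.
have := ef Rq Om econ_q i j i_neq_j.
rewrite /Rq upd_at -/Rq phi_i /vpref leNgt => /negP; apply; apply: prefers.
  by rewrite y_ge0.
by rewrite -phi_i.
Qed.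

End Rules.

Theorem lemma5 (R : realType) (n : nat) (phi : rule_fun R n) :
  is_rule phi -> own_peak_only phi ->
  (envy_free phi \/ equal_division_lower_bound phi) ->
  equal_division_guarantee phi.
Proof.
move=> rule_phi opo [ef | edlb].
  exact: equal_division_guarantee_of_envy_free.
exact: equal_division_guarantee_of_lower_bound.
Qed.
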